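(* There exists an NWBTS$(5;b)$ for every $b\ge 0$ with $b\equiv 3,4,6,7\pmod{10}$, and an NWBTS$(11;b)$ for every $b\ge0$ with $b\equiv 18,19,36,37\pmod{55}$.
   Context: A triple system TS$(v;b)$ is a pair $(V,\mathcal F)$, $V$ a set of $v\ge3$ points, $\mathcal F$ a multiset of $b$ 3-subsets (blocks). $\lambda_{x_1,\dots,x_j}$ is the number of blocks containing $\{x_1,\dots,x_j\}$; $j$-balanced means $|\lambda_{x_1,\dots,x_j}-\lambda_{y_1,\dots,y_j}|\le1$ for all $j$-subsets. Associated pair $(\lambda,\varepsilon)$ of $(v,b)$: integers with $3b=\lambda\binom v2+\varepsilon$, $-v/2<\varepsilon<v/2$. (C1): $v\equiv 2\pmod 3$ and $b\in\{\lfloor \lambda v(v-1)/6\rfloor,\lceil \lambda v(v-1)/6\rceil\}$ for an integer $\lambda$ with $\lambda\equiv1,2\pmod 3$ if $v\equiv5\pmod6$ and $\lambda\equiv 2,4\pmod 6$ if $v\equiv2\pmod 6$ ($\lambda$ is that of the associated pair; $\varepsilon\in\{\pm1,\pm2\}$). Defect graph (when all $\lambda_{x,y}\in\{\lambda-1,\lambda,\lambda+1\}$): graph on $V$ with edges the pairs with $\lambda_{x,y}=\lambda+1$ (label $+1$) or $\lambda-1$ (label $-1$); isomorphisms preserve labels. $G_1$: triangle, two $+1$ edges and one $-1$; $G_{-1}$: triangle, one $+1$ and two $-1$; $G_2$: 4-cycle, three $+1$ and one $-1$; $G_{-2}$: 4-cycle, one $+1$ and three $-1$. Under (C1), an NWBTS$(v;b)$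 is a 3-balanced TS$(v;b)$ with all $\lambda_{x,y}\in\{\lambda-1,\lambda,\lambda+1\}$ and defect graph isomorphic to $G_\varepsilon$. (The values of $b$ listed are exactly those for which $(5,b)$, resp. $(11,b)$, satisfies (C1).) *)

From mathcomp Require Import all_boot all_order all_algebra.
Set Implicit Arguments. Unset Strict Implicit. Unset Printing Implicit Defensive.
Import Order.TTheory GRing.Theory Num.Theory.
Local Open Scope ring_scope.

Definition is_TS (v : nat) (F : seq {set 'I_v}) (b : nat) : Prop :=
  (3 <= v)%N /\ size F = b /\ all (fun B : {set 'I_v} => #|B| == 3%N) F.

Definition lambdaS (v : nat) (F : seq {set 'I_v}) (S : {set 'I_v}) : nat :=
  count (fun B : {set 'I_v} => S \subset B) F.

Definition lambda2 (v : nat) (F : seq {set 'I_v}) (x y : 'I_v) : nat :=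
  lambdaS F [set x; y].

Definition j_balanced (v : nat) (F : seq {set 'I_v}) (j : nat) : Prop :=
  forall S T : {set 'I_v}, #|S| = j -> #|T| = j ->
    `|(lambdaS F S)%:Z - (lambdaS F T)%:Z| <= 1.

Definition assoc_pair (v b : nat) (lam eps : int) : Prop :=
  (3 * b)%:Z = lam * ('C(v, 2))%:Z + eps /\
  - (v%:Z) < 2 * eps /\ 2 * eps < v%:Z.

(* label of the pair {x,y} in the defect graph: lambda_{x,y} - lam
   (+1, -1 are edges with those labels, 0 is a non-edge) *)
Definition dlabel (v : nat) (F : seq {set 'I_v}) (lam : int) (x y : 'I_v) : int :=
  (lambda2 F x y)%:Z - lam.

Definition tri_lab (v : nat) (a b c : 'I_v) (s1 s2 s3 : int) (x y : 'I_v) : int :=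
  if [set x; y] == [set a; b] then s1
  else if [set x; y] == [set a; c] then s2
  else if [set x; y] == [set b; c] then s3
  else 0.

Definition cyc_lab (v : nat) (a b c d : 'I_v) (s1 s2 s3 s4 : int) (x y : 'I_v) : int :=
  if [set x; y] == [set a; b] then s1
  else if [set x; y] == [set b; c] then s2
  else if [set x; y] == [set c; d] then s3
  else if [set x; y] == [set d; a] then s4
  else 0.

(* the (labelled) defect graph is isomorphic to G_eps
   (isomorphism of the edge sets, i.e. ignoring isolated vertices) *)
Definition defect_iso_G (v : nat) (F : seq {set 'I_v}) (lam eps : int) : Prop :=
  if eps == 1 then
    exists a b c : 'I_v, [/\ uniq [:: a; b; c] &
      forall x y, x != y -> dlabel F lam x y = tri_lab a b c 1 1 (-1) x y]
  else if eps == -1 then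
    exists a b c : 'I_v, [/\ uniq [:: a; b; c] &
      forall x y, x != y -> dlabel F lam x y = tri_lab a b c 1 (-1) (-1) x y]
  else if eps == 2 then
    exists a b c d : 'I_v, [/\ uniq [:: a; b; c; d] &
      forall x y, x != y -> dlabel F lam x y = cyc_lab a b c d 1 1 1 (-1) x y]
  else if eps == -2 then
    exists a b c d : 'I_v, [/\ uniq [:: a; b; c; d] &
      forall x y, x != y -> dlabel F lam x y = cyc_lab a b c d 1 (-1) (-1) (-1) x y]
  else False.

Definition NWBTS (v : nat) (F : seq {set 'I_v}) (b : nat) : Prop :=
  is_TS F b /\ j_balanced F 3 /\
  exists lam eps : int, [/\ assoc_pair v b lam eps,
    (forall x y : 'I_v, x != y ->
       (lambda2 F x y)%:Z \in [:: lam - 1; lam; lam + 1]) &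
    defect_iso_G F lam eps].

From mathcomp Require Import all_boot all_order all_algebra.
From mathcomp Require Import ring.
Set Implicit Arguments. Unset Strict Implicit. Unset Printing Implicit Defensive.
Import Order.TTheory GRing.Theory Num.Theory.

(* Adding k copies of the complete design of all 3-subsets adds k to the count
   of every 3-subset and k(v-2) to the count of every pair, so it preserves
   3-balance, eps and the defect graph while b grows by k*C(v,3).  Hence it
   suffices to exhibit one simple NWBTS for each admissible residue of b modulo
   C(v,3), i.e. 4 residues mod 10 for v = 5 and 12 residues mod 165 for v = 11;
   these are checked by computation.  Half of them are complements of the
   others within the complete design, which turns (lambda, eps) into
   (v-2-lambda, -eps) and negates all defect labels. *)

Lemma count_enumT (T : finType) (P : pred T) : count P (enum T) = #|P|.
Proof.
rewrite cardE /enum_mem size_filter count_filter.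
by apply: eq_count => x; rewrite !inE andbT.
Qed.

Lemma lambdaS_simple v (F : seq {set 'I_v}) (S : {set 'I_v}) :
  all (fun B : {set 'I_v} => #|B| == 3) F -> uniq F -> #|S| = 3 ->
  lambdaS F S = (S \in F).
Proof.
move=> /allP F3 uF S3; rewrite /lambdaS -(count_uniq_mem S uF).
apply: eq_in_count => B /F3 /eqP B3 /=.
by rewrite eq_sym eqEcard B3 S3 leqnn andbT.
Qed.

Lemma simple_design_balanced v (F : seq {set 'I_v}) :
  all (fun B : {set 'I_v} => #|B| == 3) F -> uniq F -> j_balanced F 3.
Proof.
move=> F3 uF S T S3 T3; rewrite !lambdaS_simple //.
by case: (S \in F); case: (T \in F).
Qed.

Definition complete_design (v : nat) : seq {set 'I_v} :=
  [seq B : {set 'I_v} <- enum {set 'I_v} | #|B| == 3].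

Lemma size_complete_design v : size (complete_design v) = 'C(v, 3).
Proof.
rewrite size_filter count_enumT -[X in 'C(X, _)]card_ord -card_draws.
by apply: eq_card => B; rewrite inE.
Qed.

Lemma complete_design_uniq v : uniq (complete_design v).
Proof. by rewrite filter_uniq // enum_uniq. Qed.

Lemma complete_design_triples v :
  all (fun B : {set 'I_v} => #|B| == 3) (complete_design v).
Proof. exact: filter_all. Qed.

Lemma lambdaS_complete_design v (S : {set 'I_v}) :
  #|S| = 3 -> lambdaS (complete_design v) S = 1.
Proof.
move=> S3; rewrite lambdaS_simple ?complete_design_uniq ?complete_design_triples //.
by rewrite mem_filter S3 mem_enum.
Qed.

Lemma lambda2_complete_design v (x y : 'I_v) :
  x != y -> lambda2 (complete_design v) x y = v - 2.
Proof.
move=> xy; rewrite /lambda2 /lambdaS count_filter count_enumT.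
set S := [set x; y]; have S2 : #|S| = 2 by rewrite cards2 xy.
clearbody S.
have -> : #|predI (fun B : {set 'I_v} => S \subset B) (fun B : {set 'I_v} => #|B| == 3)|
        = #|[set z |: S | z in ~: S]|.
  apply: eq_card => B; rewrite !inE; apply/andP/imsetP => [[SB /eqP B3] | [z]].
    have /cards1P [z BSz] : #|B :\: S| == 1 by rewrite cardsDS // B3 S2.
    have : z \in B :\: S by rewrite BSz set11.
    rewrite !inE => /andP [zS zB]; exists z; rewrite ?inE //.
    by rewrite -[LHS](setID B S) BSz (setIidPr SB) setUC.
  rewrite inE => zS ->; split; first exact: subsetUr.
  by rewrite cardsU1 zS S2.
rewrite card_in_imset; first by rewrite cardsCs card_ord setCK S2.
move=> z1 z2; rewrite !inE => z1S _ E.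
by move: (setU11 z1 S); rewrite E in_setU1 (negbTE z1S) orbF => /eqP.
Qed.

Definition copies (T : Type) (k : nat) (s : seq T) : seq T := flatten (nseq k s).

Lemma count_copies (T : Type) (a : pred T) k s :
  count a (copies k s) = k * count a s.
Proof. by rewrite count_flatten map_nseq sumn_nseq mulnC. Qed.

Lemma size_copies (T : Type) k (s : seq T) : size (copies k s) = k * size s.
Proof. by rewrite -!count_predT count_copies. Qed.

Lemma all_copies (T : Type) (a : pred T) k s : all a s -> all a (copies k s).
Proof. by rewrite !all_count count_copies size_copies => /eqP ->. Qed.

Section AddCompleteDesigns.

Variables (v k : nat) (F : seq {set 'I_v}).

Let F' := F ++ copies k (complete_design v).

Lemma lambdaS_cat_complete (S : {set 'I_v}) :
  #|S| = 3 -> lambdaS F' S = lambdaS F S + k.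
Proof.
move=> S3; have := lambdaS_complete_design S3.
by rewrite /lambdaS count_cat count_copies => ->; rewrite muln1.
Qed.

Lemma lambda2_cat_complete (x y : 'I_v) :
  x != y -> lambda2 F' x y = lambda2 F x y + k * (v - 2).
Proof.
move=> xy; have := lambda2_complete_design xy.
by rewrite /lambda2 /lambdaS count_cat count_copies => ->.
Qed.

End AddCompleteDesigns.

Local Open Scope ring_scope.

Lemma near_lambda_dlabel v (F : seq {set 'I_v}) lam x y :
  ((lambda2 F x y)%:Z \in [:: lam - 1; lam; lam + 1]) =
  (dlabel F lam x y \in [:: -1; 0; 1]).
Proof. by rewrite /dlabel !inE !subr_eq add0r (addrC (-1)) (addrC 1). Qed.

Lemma defect_iso_G_eq v (F F' : seq {set 'I_v}) lam lam' eps :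
  (forall x y, x != y -> dlabel F' lam' x y = dlabel F lam x y) ->
  defect_iso_G F lam eps -> defect_iso_G F' lam' eps.
Proof.
move=> E; rewrite /defect_iso_G.
case: ifP => _; last case: ifP => _; last case: ifP => _; last case: ifP => _ //.
- by case=> a [b [c [u H]]]; exists a, b, c; split=> // x y xy; rewrite E // H.
- by case=> a [b [c [u H]]]; exists a, b, c; split=> // x y xy; rewrite E // H.
- by case=> a [b [c [d [u H]]]]; exists a, b, c, d; split=> // x y xy; rewrite E // H.
- by case=> a [b [c [d [u H]]]]; exists a, b, c, d; split=> // x y xy; rewrite E // H.
Qed.

Lemma NWBTS_cat_complete v (F : seq {set 'I_v}) b k :
  NWBTS F b -> NWBTS (F ++ copies k (complete_design v)) (b + k * 'C(v, 3))%N.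
Proof.
move=> [[v3 [sF F3]] [balF [lam [eps [[Hb [Heps1 Heps2]] nearF isoF]]]]].
set F' := F ++ _; pose lam' : int := lam + (k * (v - 2))%N%:Z.
have dlabelF' x y : x != y -> dlabel F' lam' x y = dlabel F lam x y.
  by move=> xy; rewrite /dlabel lambda2_cat_complete // PoszD opprD addrACA subrr addr0.
split.
  split=> //; split; first by rewrite size_cat size_copies size_complete_design sF.
  by rewrite all_cat F3 all_copies ?complete_design_triples.
split.
  move=> S T S3 T3; rewrite !lambdaS_cat_complete // !PoszD opprD addrACA subrr addr0.
  exact: balF.
exists lam', eps; split=> [|x y xy|]; last exact: defect_iso_G_eq isoF.
- split=> //; rewrite mulnDr PoszD Hb mulnCA mul_bin_left mulnA PoszM /lam'; ring.
- by rewrite near_lambda_dlabel dlabelF' // -near_lambda_dlabel nearF.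
Qed.

Definition pair_eq (T : eqType) (x y a b : T) : bool :=
  ((x == a) && (y == b)) || ((x == b) && (y == a)).

Lemma set2_eq (T : finType) (x y a b : T) :
  x != y -> ([set x; y] == [set a; b]) = pair_eq x y a b.
Proof.
move=> xy; apply/eqP/idP => [E|]; last first.
  by rewrite /pair_eq; case/orP=> /andP [/eqP -> /eqP ->] //; apply: setUC.
have : x \in [set a; b] by rewrite -E set21.
have : y \in [set a; b] by rewrite -E set22.
rewrite /pair_eq !inE => /orP [] /eqP yE /orP [] /eqP xE;
  by move: xy; rewrite xE yE !eqxx ?orbT.
Qed.

Fixpoint edge_label (T : eqType) (E : seq (T * T * int)) (x y : T) : int :=
  if E is (a, b, s) :: E' then (if pair_eq x y a b then s else edge_label E' x y)
  else 0.

Lemma tri_lab_edges v (a b c x y : 'I_v) s1 s2 s3 : x != y ->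
  tri_lab a b c s1 s2 s3 x y = edge_label [:: (a, b, s1); (a, c, s2); (b, c, s3)] x y.
Proof. by move=> xy; rewrite /tri_lab /= !set2_eq. Qed.

Lemma cyc_lab_edges v (a b c d x y : 'I_v) s1 s2 s3 s4 : x != y ->
  cyc_lab a b c d s1 s2 s3 s4 x y =
  edge_label [:: (a, b, s1); (b, c, s2); (c, d, s3); (d, a, s4)] x y.
Proof. by move=> xy; rewrite /cyc_lab /= !set2_eq. Qed.

Definition G_edges (T : Type) (eps : int) (a b c d : T) : seq (T * T * int) :=
  if eps == 1 then [:: (a, b, 1); (a, c, 1); (b, c, -1)]
  else if eps == -1 then [:: (a, b, 1); (a, c, -1); (b, c, -1)]
  else if eps == 2 then [:: (a, b, 1); (b, c, 1); (c, d, 1); (d, a, -1)]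
  else [:: (a, b, 1); (b, c, -1); (c, d, -1); (d, a, -1)].

Lemma edge_label_G_edges (T : eqType) eps (a b c d x y : T) :
  edge_label (G_edges eps a b c d) x y \in [:: -1; 0; 1].
Proof. by rewrite /G_edges; repeat case: ifP => _ /=. Qed.

Lemma defect_iso_G_edges v (F : seq {set 'I_v}) lam eps (a b c d : 'I_v) :
  uniq [:: a; b; c; d] -> eps \in [:: 1; -1; 2; -2] ->
  (forall x y, x != y -> dlabel F lam x y = edge_label (G_edges eps a b c d) x y) ->
  defect_iso_G F lam eps.
Proof.
move=> uabcd; have uabc : uniq [:: a; b; c].
  by move: uabcd; rewrite /= !inE !negb_or => /and4P [/and3P [-> -> _] /andP [-> _] _ _].
rewrite !inE /defect_iso_G => Heps E.
case: ifP => e1.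
  by exists a, b, c; split=> // x y xy; rewrite E // tri_lab_edges // /G_edges e1.
case: ifP => e2.
  by exists a, b, c; split=> // x y xy; rewrite E // tri_lab_edges // /G_edges e1 e2.
case: ifP => e3.
  by exists a, b, c, d; split=> // x y xy;
    rewrite E // cyc_lab_edges // /G_edges e1 e2 e3.
rewrite e1 e2 e3 /= in Heps; rewrite Heps.
by exists a, b, c, d; split=> // x y xy;
  rewrite E // cyc_lab_edges // /G_edges e1 e2 e3.
Qed.

(* Finite sets are locked and do not reduce under [vm_compute], so [base_ok]
   works on triples of numbers: blocks are compared through their
   characteristic sequences and points are enumerated through [iota]. *)
Record base_design := BaseDesign {
  bd_triples : seq (nat * nat * nat);
  bd_lambda : int;
  bd_eps : int;
  bd_defect_vertices : nat * nat * nat * nat }.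

Section BaseDesigns.

Variable n : nat.

Definition block (t : nat * nat * nat) : seq 'I_n.+1 :=
  [:: inZp t.1.1; inZp t.1.2; inZp t.2].

Definition blocks (L : seq (nat * nat * nat)) : seq {set 'I_n.+1} :=
  [seq [set x in block t] | t <- L].

Definition pair_count (L : seq (nat * nat * nat)) (x y : 'I_n.+1) : nat :=
  count (fun t => (x \in block t) && (y \in block t)) L.

Definition point_pattern (P : pred 'I_n.+1) : seq nat :=
  [seq i <- iota 0 n.+1 | P (inZp i)].

Definition all_pairs (P : 'I_n.+1 -> 'I_n.+1 -> bool) : bool :=
  all (fun i => all (fun j => P (inZp i) (inZp j)) (iota 0 n.+1)) (iota 0 n.+1).

Lemma all_pairsP (P : 'I_n.+1 -> 'I_n.+1 -> bool) : all_pairs P -> forall x y, P x y.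
Proof.
have mem_iota_ord (z : 'I_n.+1) : val z \in iota 0 n.+1 by rewrite mem_iota ltn_ord.
move=> /allP PP x y; have /allP := PP _ (mem_iota_ord x).
by move=> /(_ _ (mem_iota_ord y)); rewrite !valZpK.
Qed.

Lemma uniq_blocks L :
  uniq [seq point_pattern [pred x | x \in block t] | t <- L] -> uniq (blocks L).
Proof.
move=> uL.
apply: (@map_uniq _ _ (fun A : {set 'I_n.+1} => point_pattern [pred x | x \in A])).
rewrite -map_comp.
rewrite (eq_map (_ : _ =1 fun t => point_pattern [pred x | x \in block t])) // => t.
by apply: eq_filter => i; rewrite /= inE.
Qed.

Lemma card_blocks L :
  all (fun t => uniq (block t)) L -> all (fun B : {set 'I_n.+1} => #|B| == 3) (blocks L).
Proof.
move=> /allP uL; apply/allP => _ /mapP [t /uL ut ->].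
by rewrite cardsE (card_uniqP ut).
Qed.

Lemma lambda2_blocks L x y : lambda2 (blocks L) x y = pair_count L x y.
Proof.
rewrite /lambda2 /lambdaS count_map; apply: eq_count => t /=.
by rewrite subUset !sub1set !inE.
Qed.

Definition base_ok (D : base_design) : bool :=
  let: BaseDesign L lam eps (a, b, c, d) := D in
  let G := G_edges eps (inZp a) (inZp b) (inZp c) (inZp d) in
  [&& all (fun t => uniq (block t)) L,
      uniq [seq point_pattern [pred x | x \in block t] | t <- L],
      (3 * size L)%N%:Z == lam * 'C(n.+1, 2)%:Z + eps,
      - n.+1%:Z < 2 * eps, 2 * eps < n.+1%:Z,
      (2 < n)%N, uniq [:: inZp a; inZp b; inZp c; inZp d : 'I_n.+1],
      eps \in [:: 1; -1; 2; -2] &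
      all_pairs (fun x y => (x != y) ==>
        ((pair_count L x y)%:Z - lam == edge_label G x y))].

Lemma NWBTS_base D : base_ok D -> NWBTS (blocks (bd_triples D)) (size (bd_triples D)).
Proof.
case: D => L lam eps [[[a b] c] d] /=.
case/and5P=> uL uB /eqP Hb Heps1 /and5P [Heps2 n2 uabcd epsE /all_pairsP Hlab].
have dlabelE x y : x != y -> dlabel (blocks L) lam x y =
    edge_label (G_edges eps (inZp a) (inZp b) (inZp c) (inZp d)) x y.
  by move=> xy; apply/eqP; have := Hlab x y; rewrite xy /dlabel lambda2_blocks.
split; first by split; [exact: ltnW | split; [exact: size_map | exact: card_blocks]].
split; first by apply: simple_design_balanced; [exact: card_blocks | exact: uniq_blocks].
exists lam, eps; split=> [//|x y xy|]; last exact: defect_iso_G_edges uabcd epsE dlabelE.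
by rewrite near_lambda_dlabel dlabelE // edge_label_G_edges.
Qed.

End BaseDesigns.

Definition all_triples (v : nat) : seq (nat * nat * nat) :=
  [seq (p.1, p.2, k) | p <- [seq (i, j) | i <- iota 0 v, j <- iota i.+1 (v - i.+1)],
                       k <- iota p.2.+1 (v - p.2.+1)].

(* Negating the labels of G_eps on (a, b, c, d) gives G_(-eps) on
   [compl_vertices eps (a, b, c, d)]. *)
Definition compl_vertices (eps : int) (q : nat * nat * nat * nat) :=
  let: (a, b, c, d) := q in
  if eps == 1 then (b, c, a, d) else if eps == -1 then (c, a, b, d)
  else if eps == 2 then (d, a, b, c) else (b, c, d, a).

Definition compl_design (v : nat) (D : base_design) : base_design :=
  BaseDesign [seq t <- all_triples v | t \notin bd_triples D]
    ((v - 2)%N%:Z - bd_lambda D) (- bd_eps D)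
    (compl_vertices (bd_eps D) (bd_defect_vertices D)).

Definition designs5 : seq base_design :=
  let D := [::
    BaseDesign
      [:: (0,1,3); (0,1,4); (2,3,4)]
      1 (-1) (0, 1, 2, 3);
    BaseDesign
      [:: (0,1,2); (0,1,4); (1,2,3); (2,3,4)]
      1 2 (0, 1, 2, 3)] in
  D ++ map (compl_design 5) D.

Lemma designs5_ok : all (base_ok 4) designs5.
Proof. by vm_compute. Qed.

Definition designs11 : seq base_design :=
  let D := [::
    BaseDesign
      [:: (0,1,3); (0,1,5); (0,4,8); (0,6,7); (0,9,10); (1,4,9); (1,6,10); (1,7,8);
          (2,3,4); (2,5,10); (2,6,8); (2,7,9); (3,5,7); (3,6,9); (3,8,10); (4,5,6);
          (4,7,10); (5,8,9)]
      1 (-1) (0, 1, 2, 3);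
    BaseDesign
      [:: (0,1,6); (0,1,9); (0,2,5); (0,4,8); (0,7,10); (1,2,3); (1,2,10); (1,4,7);
          (1,5,8); (2,3,4); (2,6,9); (2,7,8); (3,5,10); (3,6,7); (3,8,9); (4,5,6);
          (4,9,10); (5,7,9); (6,8,10)]
      1 2 (0, 1, 2, 3);
    BaseDesign
      [:: (0,1,2); (0,1,5); (0,1,8); (0,2,6); (0,3,7); (0,4,5); (0,4,9); (0,6,10);
          (0,7,9); (0,8,10); (1,3,4); (1,3,6); (1,4,7); (1,5,6); (1,7,10); (1,8,9);
          (1,9,10); (2,3,9); (2,4,5); (2,4,9); (2,5,8); (2,6,7); (2,7,10); (2,8,10);
          (3,4,10); (3,5,8); (3,5,10); (3,6,9); (3,7,8); (4,6,8); (4,6,10); (4,7,8);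
          (5,6,7); (5,7,9); (5,9,10); (6,8,9)]
      2 (-2) (0, 1, 2, 3);
    BaseDesign
      [:: (0,1,6); (0,1,8); (0,1,9); (0,2,3); (0,2,4); (0,2,7); (0,3,6); (0,4,7);
          (0,5,8); (0,5,10); (0,9,10); (1,2,8); (1,3,4); (1,3,10); (1,4,5); (1,5,7);
          (1,6,9); (1,7,10); (2,3,10); (2,4,6); (2,5,6); (2,5,9); (2,7,9); (2,8,10);
          (3,4,5); (3,5,9); (3,6,7); (3,7,8); (3,8,9); (4,6,10); (4,7,9); (4,8,9);
          (4,8,10); (5,6,8); (5,7,10); (6,7,8); (6,9,10)]
      2 1 (0, 1, 2, 3);
    BaseDesign
      [:: (0,1,4); (0,1,5); (0,1,7); (0,1,8); (0,1,10); (0,2,4); (0,2,9); (0,2,10);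
          (0,3,4); (0,3,5); (0,3,6); (0,3,9); (0,4,10); (0,5,8); (0,5,9); (0,6,7);
          (0,6,8); (0,6,9); (0,7,8); (0,7,10); (1,2,6); (1,2,8); (1,2,10); (1,3,6);
          (1,3,7); (1,3,9); (1,3,10); (1,4,6); (1,4,7); (1,4,9); (1,5,6); (1,5,8);
          (1,5,10); (1,7,9); (1,8,9); (2,3,5); (2,3,6); (2,3,7); (2,3,10); (2,4,5);
          (2,4,8); (2,4,9); (2,5,7); (2,5,10); (2,6,8); (2,6,9); (2,7,8); (2,7,9);
          (3,4,5); (3,4,7); (3,4,8); (3,5,8); (3,6,7); (3,8,9); (3,8,10); (3,9,10);
          (4,5,6); (4,5,7); (4,6,9); (4,6,10); (4,7,10); (4,8,9); (4,8,10); (5,6,9);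
          (5,6,10); (5,7,8); (5,7,9); (5,9,10); (6,7,8); (6,7,10); (6,8,10);
          (7,9,10); (8,9,10)]
      4 (-1) (0, 1, 2, 3);
    BaseDesign
      [:: (0,1,2); (0,1,3); (0,1,4); (0,1,5); (0,1,7); (0,2,3); (0,2,6); (0,2,8);
          (0,3,10); (0,4,6); (0,4,9); (0,4,10); (0,5,7); (0,5,9); (0,5,10); (0,6,8);
          (0,6,9); (0,7,8); (0,7,10); (0,8,9); (1,2,5); (1,2,6); (1,2,8); (1,2,9);
          (1,3,4); (1,3,7); (1,3,10); (1,4,8); (1,4,9); (1,5,6); (1,5,8); (1,6,9);
          (1,6,10); (1,7,8); (1,7,10); (1,9,10); (2,3,4); (2,3,8); (2,3,9); (2,3,10);
          (2,4,5); (2,4,7); (2,4,10); (2,5,6); (2,5,7); (2,6,8); (2,7,9); (2,7,10);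
          (2,9,10); (3,4,6); (3,4,7); (3,5,6); (3,5,7); (3,5,8); (3,5,9); (3,6,7);
          (3,6,9); (3,8,9); (3,8,10); (4,5,7); (4,5,8); (4,5,9); (4,6,8); (4,6,10);
          (4,7,9); (4,8,10); (5,6,10); (5,8,10); (5,9,10); (6,7,8); (6,7,9);
          (6,7,10); (7,8,9); (8,9,10)]
      4 2 (0, 1, 2, 3)] in
  D ++ map (compl_design 11) D.

Lemma designs11_ok : all (base_ok 10) designs11.
Proof. by vm_compute. Qed.

Local Close Scope ring_scope.

Lemma NWBTS_of_base_residue n (D : seq base_design) b :
  all (base_ok n) D -> b %% 'C(n.+1, 3) \in [seq size (bd_triples d) | d <- D] ->
  exists F : seq {set 'I_n.+1}, NWBTS F b.
Proof.
elim: D => //= d D IH /andP [dok Dok]; rewrite inE => /orP [/eqP br | /(IH Dok)//].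
exists (blocks n (bd_triples d) ++ copies (b %/ 'C(n.+1, 3)) (complete_design n.+1)).
rewrite [X in NWBTS _ X](divn_eq b 'C(n.+1, 3)) addnC br.
exact/NWBTS_cat_complete/NWBTS_base.
Qed.

Lemma modn_mem_dvd m M (S T : seq nat) b : 0 < M -> m %| M ->
  all (fun r => (r %% m \in S) ==> (r \in T)) (iota 0 M) ->
  b %% m \in S -> b %% M \in T.
Proof.
move=> M0 mM /allP ST bS; apply: (implyP (ST _ _)); first by rewrite mem_iota ltn_pmod.
by rewrite modn_dvdm.
Qed.

Theorem lemma4p1 :
  (forall b : nat, b %% 10 \in [:: 3; 4; 6; 7]%N ->
     exists F : seq {set 'I_5}, NWBTS F b) /\
  (forall b : nat, b %% 55 \in [:: 18; 19; 36; 37]%N ->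
     exists F : seq {set 'I_11}, NWBTS F b).
Proof.
split=> b Hb.
  by apply: (NWBTS_of_base_residue designs5_ok); apply: modn_mem_dvd Hb; vm_compute.
by apply: (NWBTS_of_base_residue designs11_ok); apply: modn_mem_dvd Hb; vm_compute.
Qed.
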